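(* Let $I_A$ and $I_B$ be two MatP instances with the same underlying graph $G=(W\cup F,E)$ that differ only in the preference order of a single agent $x\in W\cup F$. Let $e=\{x,y\}\in E$ and let $I_H$ be a hybrid instance of $(I_A,I_B)$ with respect to $e$. Let $M$ be a matching with $e\in M$. Then: (1) if $M$ is popular for $I_H$, then $M$ is robust popular with respect to $I_A$ and $I_B$; (2) if $M$ is dominant for $I_H$, then $M$ is robust dominant with respect to $I_A$ and $I_B$.
   Context: An instance $I$ of matchings under preferences (MatP) consists of a bipartite graph $G^I=(W\cup F,E^I)$ with disjoint finite vertex sets $W$ (workers) and $F$ (firms), whose elements are called agents, together with, for each agent $x$, a strict linear order $\succ_x^I$ (preference order) over the set $N_x^I$ of neighbors of $x$ in $G^I$. A matching is a set of pairwise disjoint edges; $M(x)$ denotes the partner of a matched agent $x$. Agent $x$ prefers $M$ over $M'$ if $x$ is matched in $M$ and unmatched in $M'$, or matched in both with $M(x)\succ_x M'(x)$. Define $\mathrm{vote}^I_x(M,M')=1$ if $x$ prefers $M$ over $M'$, $-1$ if $x$ prefers $M'$ over $M$, and $0$ otherwise, and the popularity margin $\phi^I(M,M')=\sum_{x\in W\cup F}\mathrm{vote}^I_x(M,M')$. A matching $M$ of $G^I$ is popular for $I$ if $\phi^I(M,M')\ge 0$ for every matching $M'$ of $G^I$; it is dominant for $I$ if it is popular and $\phi^I(M,M')>0$ for every matching $M'$ of $G^I$ with $|M'|>|M|$. For two instances $I_A,I_B$ on the same agent sets, a matching is robust popular (resp. robust dominant) with respect to $I_A$ and $I_B$ if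 it is popular (resp. dominant) for both $I_A$ and $I_B$. Hybrid instance: suppose $I_A,I_B$ have the same graph $G$ and differ only in the preferences of agent $x$, and let $e=\{x,y\}\in E$. Let $P^A=\{z: z\succ_x^{I_A} y\}$ and $P^B=\{z: z\succ_x^{I_B} y\}$. A hybrid instance $I_H$ of $(I_A,I_B)$ with respect to $e$ is the MatP instance on $G$ in which every agent $z\neq x$ has preference order $\succ_z^{I_A}$, and $x$ has any linear order $\succ'$ on $N_x$ such that $z\succ' y$ for all $z\in P^A\cup P^B$ and $y\succ' z$ for all $z\in N_x\setminus(P^A\cup P^B\cup\{y\})$. *)

From mathcomp Require Import all_boot all_order all_algebra.
Set Implicit Arguments. Unset Strict Implicit. Unset Printing Implicit Defensive.
Import Order.TTheory GRing.Theory Num.Theory.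

Section MatP.
Variables (W F : finType).
Definition agent := (W + F)%type.

Variable E : W -> F -> bool.

Definition adj (a b : agent) : bool :=
  match a, b with
  | inl w, inr f => E w f
  | inr f, inl w => E w f
  | _, _ => false
  end.

(* a preference profile: pref x a b means  a >_x b *)
Definition prefs := agent -> agent -> agent -> bool.

Definition valid_prefs (p : prefs) : Prop :=
  forall x : agent,
    (forall a, adj x a -> ~~ p x a a) /\
    (forall a b c, adj x a -> adj x b -> adj x c ->
        p x a b -> p x b c -> p x a c) /\
    (forall a b, adj x a -> adj x b -> a != b -> p x a b || p x b a).

Definition is_matching (M : {set W * F}) : Prop :=
  (forall e, e \in M -> E e.1 e.2) /\
  (forall e e', e \in M -> e' \in M -> (e.1 = e'.1 \/ e.2 = e'.2) -> e = e').

Definition in_matching (M : {set W * F}) (a b : agent) : bool :=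
  match a, b with
  | inl w, inr f => (w, f) \in M
  | inr f, inl w => (w, f) \in M
  | _, _ => false
  end.

Definition partner (M : {set W * F}) (x : agent) : option agent :=
  [pick z | in_matching M x z].

Definition prefers (p : prefs) (M M' : {set W * F}) (x : agent) : bool :=
  match partner M x, partner M' x with
  | Some z, None => true
  | Some z, Some z' => p x z z'
  | None, _ => false
  end.

Definition vote (p : prefs) (M M' : {set W * F}) (x : agent) : int :=
  (prefers p M M' x)%:Z - (prefers p M' M x)%:Z.

Definition phi (p : prefs) (M M' : {set W * F}) : int :=
  \sum_(x : agent) vote p M M' x.

Definition popular (p : prefs) (M : {set W * F}) : Prop :=
  is_matching M /\ forall M', is_matching M' -> (0 <= phi p M M')%R.

Definition dominant (p : prefs) (M : {set W * F}) : Prop :=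
  popular p M /\
  forall M', is_matching M' -> #|M| < #|M'| -> (0 < phi p M M')%R.

Definition differ_only_at (pA pB : prefs) (x : agent) : Prop :=
  forall z a b, z != x -> adj z a -> adj z b -> pA z a b = pB z a b.

Definition hybrid (pA pB pH : prefs) (x y : agent) : Prop :=
  valid_prefs pH /\
  (forall z a b, z != x -> adj z a -> adj z b -> pH z a b = pA z a b) /\
  (forall z, adj x z -> pA x z y || pB x z y -> pH x z y) /\
  (forall z, adj x z -> ~~ (pA x z y || pB x z y) -> z != y -> pH x y z).

End MatP.

From mathcomp Require Import all_boot all_order all_algebra.
Import Order.TTheory GRing.Theory Num.Theory.
Set Implicit Arguments. Unset Strict Implicit.
Local Open Scope ring_scope.

(* Since M(x) = y, agent x compares M with M' by asking whether M'(x) beats y.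
   Every agent other than x votes identically under the hybrid and under I_A,
   and x, who ranks above y under the hybrid everything it ranks above y under
   I_A, can only be less favourable to M under the hybrid.  Hence
   phi_H(M, M') <= phi_A(M, M') for every matching M', so popularity and
   dominance for I_H carry over to I_A, and symmetrically to I_B. *)

Section Matchings.
Variables (W F : finType) (E : W -> F -> bool).

Lemma in_matching_adj M (a b : agent W F) :
  is_matching E M -> in_matching M a b -> adj E a b.
Proof. by move=> [inE _]; case: a => a; case: b => b //= /inE. Qed.

Lemma partner_adj M (a b : agent W F) :
  is_matching E M -> partner M a = Some b -> adj E a b.
Proof.
by move=> hM; rewrite /partner; case: pickP => // z hz [<-]; exact: in_matching_adj hz.
Qed.

Lemma partner_in_matching M (a b : agent W F) :
  is_matching E M -> in_matching M a b -> partner M a = Some b.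
Proof.
move=> [_ uniqM] hab; rewrite /partner; case: pickP => [c hac|/(_ b)]; last by rewrite hab.
congr Some; case: a hab hac => a; case: b => b //; case: c => c //= hab hac.
- by case: (uniqM _ _ hac hab (or_introl erefl)) => ->.
- by case: (uniqM _ _ hac hab (or_intror erefl)) => ->.
Qed.

Lemma pref_swap (p : prefs W F) (x a b : agent W F) :
  valid_prefs E p -> adj E x a -> adj E x b -> a != b -> p x b a = ~~ p x a b.
Proof.
move=> /(_ x) [irr [trans total]] xa xb neq_ab.
apply/idP/idP => [pba|]; last by have := total _ _ xa xb neq_ab; case: (p x a b).
apply/negP => pab; have := irr _ xa; by rewrite (trans _ _ _ xa xb xa pab pba).
Qed.

Lemma vote_partners (p : prefs W F) M M' (x y z : agent W F) :
  valid_prefs E p -> is_matching E M' -> adj E x y ->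
  partner M x = Some y -> partner M' x = Some z -> z != y ->
  vote p M M' x = (~~ p x z y)%:Z - (p x z y)%:Z.
Proof.
move=> vp hM' xy Mx M'x neq_zy.
have xz := partner_adj hM' M'x.
by rewrite /vote /prefers Mx M'x (pref_swap vp xz xy neq_zy).
Qed.

Section HybridComparison.
Variables (pA pH : prefs W F) (x y : agent W F).
Hypotheses (vA : valid_prefs E pA) (vH : valid_prefs E pH) (xy : adj E x y).
Hypothesis pH_off_x :
  forall z a b, z != x -> adj E z a -> adj E z b -> pH z a b = pA z a b.
Hypothesis pH_above_y : forall z, adj E x z -> pA x z y -> pH x z y.

Variables (M M' : {set W * F}).
Hypotheses (hM : is_matching E M) (hM' : is_matching E M') (Mxy : in_matching M x y).

Lemma vote_hybrid_off (z : agent W F) :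
  z != x -> vote pH M M' z = vote pA M M' z.
Proof.
move=> neq_zx; rewrite /vote /prefers.
case Mz: (partner M z) => [a|]; case M'z: (partner M' z) => [b|] //.
have za := partner_adj hM Mz; have zb := partner_adj hM' M'z.
by rewrite !pH_off_x.
Qed.

Lemma vote_hybrid_at_x : (vote pH M M' x <= vote pA M M' x).
Proof.
have Mx := partner_in_matching hM Mxy.
case M'x: (partner M' x) => [z|]; last by rewrite /vote /prefers Mx M'x.
have [eq_zy|neq_zy] := eqVneq z y; first by rewrite /vote /prefers Mx M'x eq_zy !subrr.
rewrite (vote_partners vH hM' xy Mx M'x neq_zy) (vote_partners vA hM' xy Mx M'x neq_zy).
case pAz: (pA x z y); first by rewrite pH_above_y // (partner_adj hM' M'x).
by case: (pH x z y).
Qed.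

Lemma phi_hybrid_le : (phi pH M M' <= phi pA M M').
Proof.
apply: ler_sum => z _; have [->|neq_zx] := eqVneq z x.
- exact: vote_hybrid_at_x.
- by rewrite vote_hybrid_off.
Qed.

End HybridComparison.

Lemma popular_dominant_hybrid (pA pH : prefs W F) (x y : agent W F) M :
  valid_prefs E pA -> valid_prefs E pH -> adj E x y ->
  (forall z a b, z != x -> adj E z a -> adj E z b -> pH z a b = pA z a b) ->
  (forall z, adj E x z -> pA x z y -> pH x z y) ->
  is_matching E M -> in_matching M x y ->
  (popular E pH M -> popular E pA M) /\ (dominant E pH M -> dominant E pA M).
Proof.
move=> vA vH xy off above hM Mxy.
have le_phi M' : is_matching E M' -> phi pH M M' <= phi pA M M'.
  by move=> hM'; exact: (phi_hybrid_le vA vH xy off above hM hM' Mxy).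
have popA : popular E pH M -> popular E pA M.
  by move=> [_ popH]; split=> // M' hM'; exact: le_trans (popH _ hM') (le_phi _ hM').
split=> // -[popH domH]; split; first exact: popA.
by move=> M' hM' ltM; exact: lt_le_trans (domH _ hM' ltM) (le_phi _ hM').
Qed.

End Matchings.

Theorem lemma1 (W F : finType) (E : W -> F -> bool) (pA pB pH : prefs W F)
  (x y : agent W F) (M : {set W * F}) :
  valid_prefs E pA -> valid_prefs E pB ->
  differ_only_at E pA pB x ->
  adj E x y ->
  hybrid E pA pB pH x y ->
  is_matching E M -> in_matching M x y ->
  (popular E pH M -> popular E pA M /\ popular E pB M) /\
  (dominant E pH M -> dominant E pA M /\ dominant E pB M).
Proof.
move=> vA vB AB xy [vH [offA [above _]]] hM Mxy.
have offB z a b : z != x -> adj E z a -> adj E z b -> pH z a b = pB z a b.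
  by move=> neq_zx za zb; rewrite offA // AB.
have [popA domA] := popular_dominant_hybrid vA vH xy offA
  (fun z xz pAz => above z xz (introT orP (or_introl pAz))) hM Mxy.
have [popB domB] := popular_dominant_hybrid vB vH xy offB
  (fun z xz pBz => above z xz (introT orP (or_intror pBz))) hM Mxy.
by split=> h; split; [exact: popA | exact: popB | exact: domA | exact: domB].
Qed.
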